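(* Let $\mu>1/2$, $0<\nu<1/2$. Let $\mathfrak F\in C^1(\mathbb{R})$ be such that $\mathfrak F'$ is even, nonnegative, and decreasing on $[0,\infty)$, and $\mathfrak F(\infty)-\mathfrak F(-\infty)=(\mu-\nu)\pi$. Then the function $x\mapsto H\mathfrak F(x)-H\mathfrak F(0)$ is even on $\mathbb{R}$ and increasing on $[0,\infty)$. Moreover, for all $y>x\ge0$, $$0\le H\mathfrak F(y)-H\mathfrak F(x)=\frac1\pi\int_x^y\frac{\mathfrak F(\gamma)-\mathfrak F(-\gamma)}{\gamma}\,d\gamma+\mathfrak R(x,y),\qquad\text{where } -2(\mu-\nu)\le\mathfrak R(x,y)\le 2(\mu-\nu).$$
   Context: Since $\mathfrak F$ does not decay at infinity, differences of its Hilbert transform are defined by $H\mathfrak F(y)-H\mathfrak F(x):=\frac1\pi\int_0^\infty\frac{\mathfrak F(y-\gamma)-\mathfrak F(y+\gamma)-\mathfrak F(x-\gamma)+\mathfrak F(x+\gamma)}{\gamma}\,d\gamma$, consistent with the Hilbert transform $Hf(x)=\frac1\pi\mathrm{p.v.}\int\frac{f(y)}{x-y}dy=\frac1\pi\int_0^\infty\frac{f(x-\gamma)-f(x+\gamma)}{\gamma}d\gamma$. *)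

From Stdlib Require Import Reals Lra.
Open Scope R_scope.

Definition lim_pinf (f : R -> R) (l : R) : Prop :=
  forall eps, 0 < eps -> exists M, forall x, M <= x -> Rabs (f x - l) < eps.

Definition lim_minf (f : R -> R) (l : R) : Prop :=
  forall eps, 0 < eps -> exists M, forall x, x <= M -> Rabs (f x - l) < eps.

Definition improper_int0 (g : R -> R) (l : R) : Prop :=
  (forall b, 0 <= b -> inhabited (Riemann_integrable g 0 b)) /\
  forall eps, 0 < eps -> exists M, forall b (pr : Riemann_integrable g 0 b),
      M <= b -> Rabs (RiemannInt pr - l) < eps.

(* Integrand defining H F(y) - H F(x). At gamma = 0 the numerator vanishes,
   so the value there (0 / 0 = 0 in Rocq) is irrelevant. *)
Definition HF_integrand (F : R -> R) (x y : R) (g : R) : R :=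
  (F (y - g) - F (y + g) - F (x - g) + F (x + g)) / g.

(* HF_diff F x y L  :<->  H F(y) - H F(x) = L, where
   H F(y) - H F(x) := (1/PI) * int_0^oo HF_integrand F x y. *)
Definition HF_diff (F : R -> R) (x y L : R) : Prop :=
  improper_int0 (HF_integrand F x y) (PI * L).

From Coquelicot Require Import Coquelicot.
From Stdlib Require Import Reals Lra.
Open Scope R_scope.

(* Put Fc t := F t - F 0.  Since F' is even, Fc is odd; F' >= 0 makes it
   nondecreasing and F' decreasing on [0, oo) makes F concave there.  The limits
   of F at +-oo are then F 0 +- A with A := (Lp - Lm) / 2 = (mu - nu) PI / 2,
   so |Fc| <= A.  By oddness the integrand of H F(y) - H F(x) is
   (S x g - S y g) / g with the symmetric sum S t g := Fc (g + t) + Fc (g - t).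
   - S t g is nonincreasing in t >= 0 (as |g + t| >= |g - t|): this gives
     evenness, monotonicity and nonnegativity of the Hilbert differences.
   - By concavity, int_0^b S t g / g - int_t^b 2 Fc g / g lies in [-A, 3A]
     for every b >= t; subtracting the cases t = x and t = y gives the estimate
     with error 4 A = 2 (mu - nu) PI.
   - Writing the integrand as translated differences of F shows that its
     integral over [b1, b2] is O(1 / b1): the improper integral converges.
   The file develops limits at +oo and improper integrals, then facts about
   Riemann integrals (Coquelicot's RInt), then the properties of F and the
   integral estimates, and derives the theorem at the end. *)

Lemma lim_pinf_le (f g : R -> R) (l1 l2 B : R) :
  lim_pinf f l1 -> lim_pinf g l2 -> (forall b, B <= b -> f b <= g b) -> l1 <= l2.
Proof.
  intros Hf Hg Hfg. apply Rnot_lt_le; intro Hlt.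
  destruct (Hf ((l1 - l2) / 2)) as [M1 HM1]; [lra|].
  destruct (Hg ((l1 - l2) / 2)) as [M2 HM2]; [lra|].
  set (b := Rmax B (Rmax M1 M2)).
  assert (HB : B <= b) by apply Rmax_l.
  assert (H1 : M1 <= b) by (eapply Rle_trans; [apply Rmax_l | apply Rmax_r]).
  assert (H2 : M2 <= b) by (eapply Rle_trans; [apply Rmax_r | apply Rmax_r]).
  specialize (HM1 b H1); specialize (HM2 b H2); specialize (Hfg b HB).
  apply Rabs_lt_between in HM1; apply Rabs_lt_between in HM2. lra.
Qed.

Lemma lim_pinf_const (c : R) : lim_pinf (fun _ => c) c.
Proof. intros eps Heps; exists 0; intros; rewrite Rminus_diag, Rabs_R0; exact Heps. Qed.

Lemma lim_pinf_unique (f : R -> R) (l1 l2 : R) : lim_pinf f l1 -> lim_pinf f l2 -> l1 = l2.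
Proof.
  intros H1 H2; apply Rle_antisym; apply (lim_pinf_le f f _ _ 0); auto; intros; lra.
Qed.

Lemma lim_pinf_of_cauchy (f : R -> R) :
  (forall eps, 0 < eps -> exists M, forall u v, M <= u -> M <= v -> Rabs (f v - f u) < eps) ->
  exists l, lim_pinf f l.
Proof.
  intro Hc.
  destruct (proj1 (filterlim_locally_cauchy (F := Rbar_locally p_infty) f)) as [l Hl].
  - intro eps. destruct (Hc eps (cond_pos eps)) as [M HM].
    exists (fun b => M <= b). split.
    + exists M; intros; lra.
    + intros u v Hu Hv. exact (HM u v Hu Hv).
  - exists l. intros eps Heps.
    destruct (proj1 (filterlim_locally f l) Hl (mkposreal eps Heps)) as [M HM].
    exists (M + 1); intros x Hx. apply (HM x); lra.
Qed.

Lemma lim_pinf_of_tail_bound (f : R -> R) (C : R) :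
  (forall b1 b2, 1 <= b1 <= b2 -> Rabs (f b2 - f b1) <= C / b1) ->
  exists l, lim_pinf f l.
Proof.
  intro Htail. apply lim_pinf_of_cauchy. intros eps Heps.
  assert (HC : 0 <= C).
  { specialize (Htail 1 1 ltac:(lra)). rewrite Rminus_diag, Rabs_R0 in Htail. lra. }
  assert (HCeps : 0 <= C / eps) by (apply Rdiv_le_0_compat; lra).
  assert (Hsmall : forall b, 1 + C / eps <= b -> C / b < eps).
  { intros b Hb. apply Rmult_lt_reg_r with b; [lra|]. unfold Rdiv; rewrite Rmult_assoc, Rinv_l by lra.
    replace C with (eps * (C / eps)) at 1 by (field; lra). nra. }
  exists (1 + C / eps). intros u v Hu Hv.
  destruct (Rle_dec u v) as [Huv|Hvu].
  - eapply Rle_lt_trans; [apply Htail; lra | auto].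
  - rewrite Rabs_minus_sym. eapply Rle_lt_trans; [apply Htail; lra | auto].
Qed.

Lemma lim_minf_reflect (f : R -> R) (l : R) : lim_minf f l -> lim_pinf (fun x => f (- x)) l.
Proof.
  intros Hf eps Heps. destruct (Hf eps Heps) as [M HM].
  exists (- M); intros x Hx. apply HM; lra.
Qed.

Lemma improper_int0_lim (g : R -> R) (l : R) :
  improper_int0 g l -> lim_pinf (fun b => RInt g 0 b) l.
Proof.
  intros [Hint Hlim] eps Heps. destruct (Hlim eps Heps) as [M HM].
  exists (Rmax M 0); intros b Hb.
  assert (H0 : 0 <= b) by (eapply Rle_trans; [apply Rmax_r | exact Hb]).
  destruct (Hint b H0) as [pr]. rewrite (RInt_Reals g 0 b pr).
  apply HM. eapply Rle_trans; [apply Rmax_l | exact Hb].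
Qed.

Lemma improper_int0_intro (g : R -> R) (l : R) :
  (forall b, 0 <= b -> ex_RInt g 0 b) -> lim_pinf (fun b => RInt g 0 b) l ->
  improper_int0 g l.
Proof.
  intros Hint Hlim. split.
  - intros b Hb. constructor. apply ex_RInt_Reals_0, Hint, Hb.
  - intros eps Heps. destruct (Hlim eps Heps) as [M HM].
    exists M; intros b pr Hb. rewrite <- RInt_Reals. apply HM, Hb.
Qed.

(* Linearity of RInt for real functions, stated with the field operations of R
   (Coquelicot's versions use the module operations and do not match by rewrite). *)
Lemma RInt_plus_R (f g : R -> R) (a b : R) : ex_RInt f a b -> ex_RInt g a b ->
  RInt (fun x => f x + g x) a b = RInt f a b + RInt g a b.
Proof. intros Hf Hg; exact (RInt_plus f g a b Hf Hg). Qed.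

Lemma RInt_minus_R (f g : R -> R) (a b : R) : ex_RInt f a b -> ex_RInt g a b ->
  RInt (fun x => f x - g x) a b = RInt f a b - RInt g a b.
Proof. intros Hf Hg; exact (RInt_minus f g a b Hf Hg). Qed.

Lemma RInt_scal_R (f : R -> R) (a b c : R) : ex_RInt f a b ->
  RInt (fun x => c * f x) a b = c * RInt f a b.
Proof. intro Hf; exact (RInt_scal f a b c Hf). Qed.

Lemma ex_RInt_derivable (f : R -> R) (a b : R) : (forall z, ex_derive f z) -> ex_RInt f a b.
Proof.
  intro Hf. apply (ex_RInt_continuous (V := R_CompleteNormedModule)).
  intros z _; apply (ex_derive_continuous f), Hf.
Qed.

Lemma RInt_between_const (f : R -> R) (a b lo hi : R) : a <= b -> ex_RInt f a b ->
  (forall x, a < x < b -> lo <= f x <= hi) -> lo * (b - a) <= RInt f a b <= hi * (b - a).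
Proof.
  intros Hab Hf Hbnd.
  assert (Hconst : forall c, RInt (fun _ => c) a b = c * (b - a)).
  { intro c. rewrite RInt_const. unfold scal; simpl; unfold mult; simpl. ring. }
  split; rewrite <- Hconst; apply RInt_le; auto; try apply ex_RInt_const;
    intros x Hx; apply Hbnd, Hx.
Qed.

(* If N is differentiable with N 0 = 0, then N g / g extends continuously to
   g = 0 by N'(0); this makes the singular integrands below integrable. *)
Lemma div_removable_continuous (N : R -> R) (z : R) :
  (forall g, ex_derive N g) -> N 0 = 0 ->
  continuous (fun g => if Req_EM_T g 0 then Derive N 0 else N g / g) z.
Proof.
  intros HN HN0. destruct (Req_EM_T z 0) as [Hz|Hz].
  - subst z. apply continuity_pt_filterlim.
    pose proof (proj1 (is_derive_Reals _ _ _) (Derive_correct N 0 (HN 0))) as HD.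
    intros eps Heps. destruct (HD eps Heps) as [del Hdel].
    exists del. split; [apply cond_pos|]. intros x [_ Hx]. simpl in *; unfold R_dist in *.
    destruct (Req_EM_T 0 0) as [_|]; [|congruence].
    destruct (Req_EM_T x 0) as [Hx0|Hx0].
    + rewrite Rminus_diag, Rabs_R0; exact Heps.
    + rewrite Rminus_0_r in Hx. specialize (Hdel x Hx0 Hx).
      rewrite Rplus_0_l, HN0, Rminus_0_r in Hdel. exact Hdel.
  - apply (continuous_ext_loc _ (fun g => N g / g)).
    + assert (Hpos : 0 < Rabs z) by (apply Rabs_pos_lt, Hz).
      exists (mkposreal _ Hpos). intros y Hy.
      destruct (Req_EM_T y 0) as [Hy0|]; [|reflexivity].
      exfalso. subst y. unfold ball in Hy; simpl in Hy.
      unfold AbsRing_ball, abs, minus, plus, opp in Hy; simpl in Hy.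
      rewrite Rplus_0_l, Rabs_Ropp in Hy. lra.
    + apply continuity_pt_filterlim, continuity_pt_div; auto.
      * apply continuity_pt_filterlim, (ex_derive_continuous N), HN.
      * apply continuity_pt_id.
Qed.

(* Hence N g / g is integrable between any two nonnegative bounds (the value at
   g = 0, where the extension differs, is an endpoint). *)
Lemma ex_RInt_div_removable (N : R -> R) (a b : R) :
  (forall g, ex_derive N g) -> N 0 = 0 -> 0 <= a -> 0 <= b ->
  ex_RInt (fun g => N g / g) a b.
Proof.
  intros HN HN0 Ha Hb.
  apply ex_RInt_ext with (f := fun g => if Req_EM_T g 0 then Derive N 0 else N g / g).
  - intros x [Hx _]. destruct (Req_EM_T x 0) as [Hx0|]; [|reflexivity].
    exfalso. unfold Rmin in Hx. destruct (Rle_dec a b); lra.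
  - apply (ex_RInt_continuous (V := R_CompleteNormedModule)).
    intros z _; apply div_removable_continuous; auto.
Qed.

Lemma ex_RInt_div_pos (N : R -> R) (a b : R) :
  (forall g, ex_derive N g) -> 0 < a -> 0 < b -> ex_RInt (fun g => N g / g) a b.
Proof.
  intros HN Ha Hb. apply (ex_RInt_continuous (V := R_CompleteNormedModule)).
  intros z Hz. apply continuity_pt_filterlim, continuity_pt_div.
  - apply continuity_pt_filterlim, (ex_derive_continuous N), HN.
  - apply continuity_pt_id.
  - unfold Rmin in Hz; destruct (Rle_dec a b); lra.
Qed.

Lemma RInt_translate (h : R -> R) (u a b : R) : ex_RInt h (a + u) (b + u) ->
  RInt (fun g => h (g + u)) a b = RInt h (a + u) (b + u).
Proof.
  intro Hh. pose proof (RInt_comp_lin h 1 u a b) as Hlin.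
  rewrite !Rmult_1_l in Hlin. rewrite <- (Hlin Hh).
  apply RInt_ext; intros x _. unfold scal; simpl; unfold mult; simpl.
  rewrite Rmult_1_l, Rmult_1_l, Rplus_comm. reflexivity.
Qed.

Lemma RInt_translate_diff (h : R -> R) (u v a b : R) : (forall z, ex_derive h z) ->
  RInt (fun g => h (g + u) - h (g + v)) a b = RInt h (b + v) (b + u) - RInt h (a + v) (a + u).
Proof.
  intro Hh. assert (Hint : forall c d, ex_RInt h c d) by (intros; apply ex_RInt_derivable, Hh).
  assert (Hshift : forall w c d, ex_RInt (fun g => h (g + w)) c d).
  { intros w c d. apply ex_RInt_derivable. intro z. auto_derive. apply Hh. }
  rewrite RInt_minus_R, !RInt_translate by auto.
  assert (Hu := RInt_Chasles h (a + v) (a + u) (b + u) (Hint _ _) (Hint _ _)).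
  assert (Hv := RInt_Chasles h (a + v) (b + v) (b + u) (Hint _ _) (Hint _ _)).
  unfold plus in Hu, Hv; simpl in Hu, Hv. lra.
Qed.

Lemma RInt_translate_diff_le (h : R -> R) (u v a b lo hi : R) :
  (forall z, ex_derive h z) -> v <= u -> a <= b ->
  (forall z, a + v <= z -> lo <= h z <= hi) ->
  RInt (fun g => h (g + u) - h (g + v)) a b <= (u - v) * (hi - lo).
Proof.
  intros Hh Huv Hab Hbnd. rewrite RInt_translate_diff by exact Hh.
  assert (Hint : forall c d, ex_RInt h c d) by (intros; apply ex_RInt_derivable, Hh).
  assert (Hb := RInt_between_const h (b + v) (b + u) lo hi ltac:(lra) (Hint _ _)
                  ltac:(intros; apply Hbnd; lra)).
  assert (Ha := RInt_between_const h (a + v) (a + u) lo hi ltac:(lra) (Hint _ _)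
                  ltac:(intros; apply Hbnd; lra)).
  replace (b + u - (b + v)) with (u - v) in Hb by ring.
  replace (a + u - (a + v)) with (u - v) in Ha by ring. lra.
Qed.

Section RadialDerivative.

Variables F F' : R -> R.
Hypothesis HF' : forall x, derivable_pt_lim F x (F' x).
Hypothesis HF'even : forall x, F' (- x) = F' x.
Hypothesis HF'nonneg : forall x, 0 <= F' x.
Hypothesis HF'decr : forall a b, 0 <= a -> a <= b -> F' b <= F' a.

Lemma F_ex_derive (z : R) : ex_derive F z.
Proof. exists (F' z); apply is_derive_Reals, HF'. Qed.

Lemma Derive_F (z : R) : Derive F z = F' z.
Proof. apply is_derive_unique, is_derive_Reals, HF'. Qed.

Ltac derive_F := apply is_derive_Reals; auto_derive;
  [repeat split; apply F_ex_derive | rewrite ?Derive_F; unfold Rminus; ring].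

Lemma F_reflect (t : R) : F (- t) = 2 * F 0 - F t.
Proof.
  assert (Hconst : forall a b, a < b -> F b + F (- b) = F a + F (- a)).
  { intros a b Hab.
    destruct (MVT_cor2 (fun s => F s + F (- s)) (fun s => F' s - F' (- s)) a b Hab)
      as [c [Hc _]].
    - intros c _. derive_F.
    - rewrite HF'even in Hc. lra. }
  destruct (Rtotal_order t 0) as [Ht | [Ht | Ht]].
  - pose proof (Hconst t 0 Ht). rewrite Ropp_0 in *. lra.
  - subst t. rewrite Ropp_0. lra.
  - pose proof (Hconst 0 t Ht). rewrite Ropp_0 in *. lra.
Qed.

Lemma F_monotone (a b : R) : a <= b -> F a <= F b.
Proof.
  intros [Hab | <-]; [|lra].
  destruct (MVT_cor2 F F' a b Hab) as [c [Hc _]]; [intros; apply HF'|].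
  pose proof (HF'nonneg c). nra.
Qed.

Lemma F'_abs_antitone (a b : R) : Rabs a <= Rabs b -> F' b <= F' a.
Proof.
  intro Hab. assert (Habs : forall x, F' x = F' (Rabs x)).
  { intro x. unfold Rabs; destruct (Rcase_abs x); [rewrite HF'even|]; reflexivity. }
  rewrite (Habs a), (Habs b). apply HF'decr; [apply Rabs_pos | exact Hab].
Qed.

Lemma F_concave (a b c : R) : 0 <= a -> a < b -> b < c ->
  (F c - F b) * (b - a) <= (F b - F a) * (c - b).
Proof.
  intros Ha Hab Hbc.
  destruct (MVT_cor2 F F' a b Hab) as [c1 [Hc1 Hc1']]; [intros; apply HF'|].
  destruct (MVT_cor2 F F' b c Hbc) as [c2 [Hc2 Hc2']]; [intros; apply HF'|].
  assert (F' c2 <= F' c1) by (apply HF'decr; lra).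
  rewrite Hc1, Hc2. assert (0 < (b - a) * (c - b)) by nra. nra.
Qed.

Lemma F_pair_sum_antitone (g s t : R) : 0 <= g -> 0 <= s -> s <= t ->
  F (g + t) + F (g - t) <= F (g + s) + F (g - s).
Proof.
  intros Hg Hs [Hst | <-]; [|lra].
  destruct (MVT_cor2 (fun r => F (g + r) + F (g - r)) (fun r => F' (g + r) - F' (g - r))
              s t Hst) as [c [Hc Hc']].
  - intros c _. derive_F.
  - assert (F' (g + c) <= F' (g - c)).
    { apply F'_abs_antitone. rewrite (Rabs_pos_eq (g + c)) by lra. apply Rabs_le; lra. }
    simpl in Hc. nra.
Qed.

Lemma F_le_lim_pinf (Lp t : R) : lim_pinf F Lp -> F t <= Lp.
Proof.
  intro HLp. apply (lim_pinf_le (fun _ => F t) F _ _ t (lim_pinf_const _) HLp).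
  intros b Hb; apply F_monotone, Hb.
Qed.

Lemma F_ge_lim_minf (Lm t : R) : lim_minf F Lm -> Lm <= F t.
Proof.
  intro HLm. apply (lim_pinf_le (fun x => F (- x)) (fun _ => F t) _ _ (- t)).
  - apply lim_minf_reflect, HLm.
  - apply lim_pinf_const.
  - intros b Hb; apply F_monotone; lra.
Qed.

(* ... and, F - F 0 being odd, these limits are symmetric about F 0. *)
Lemma F_limits_mean (Lp Lm : R) : lim_pinf F Lp -> lim_minf F Lm -> Lp + Lm = 2 * F 0.
Proof.
  intros HLp HLm.
  assert (Hrefl : lim_pinf (fun x => F (- x)) (2 * F 0 - Lp)).
  { intros eps Heps. destruct (HLp eps Heps) as [M HM]. exists M; intros x Hx.
    rewrite F_reflect. replace (2 * F 0 - F x - (2 * F 0 - Lp)) with (- (F x - Lp)) by ring.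
    rewrite Rabs_Ropp. apply HM, Hx. }
  pose proof (lim_pinf_unique _ _ _ (lim_minf_reflect F Lm HLm) Hrefl). lra.
Qed.

Definition Fc (t : R) : R := F t - F 0.

(* The symmetric sum S t g := Fc (g + t) + Fc (g - t); the integrand of
   H F(y) - H F(x) is (S x g - S y g) / g. *)
Definition sym_sum (t g : R) : R := Fc (g + t) + Fc (g - t).

Lemma Fc_odd (t : R) : Fc (- t) = - Fc t.
Proof. unfold Fc; rewrite F_reflect; ring. Qed.

Lemma Fc_monotone (a b : R) : a <= b -> Fc a <= Fc b.
Proof. intro Hab; unfold Fc; pose proof (F_monotone a b Hab); lra. Qed.

Lemma Fc_nonneg (t : R) : 0 <= t -> 0 <= Fc t.
Proof. intro Ht; pose proof (Fc_monotone 0 t Ht); unfold Fc in *; lra. Qed.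

Lemma Fc_ex_derive (z : R) : ex_derive Fc z.
Proof. unfold Fc; auto_derive; apply F_ex_derive. Qed.

Lemma HF_integrand_sym (x y g : R) :
  HF_integrand F x y g = sym_sum x g / g - sym_sum y g / g.
Proof.
  unfold HF_integrand, sym_sum.
  replace (y - g) with (- (g - y)) by ring. replace (x - g) with (- (g - x)) by ring.
  replace (y + g) with (g + y) by ring. replace (x + g) with (g + x) by ring.
  rewrite !F_reflect. unfold Fc, Rdiv; ring.
Qed.

Lemma principal_integrand_eq (g : R) : (F g - F (- g)) / g = 2 * Fc g / g.
Proof. rewrite F_reflect; unfold Fc, Rdiv; ring. Qed.

(* The three singular integrands vanish at g = 0 to first order, so they are
   integrable on [0, b]. *)
Lemma ex_RInt_sym_sum_div (t a b : R) : 0 <= a -> 0 <= b ->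
  ex_RInt (fun g => sym_sum t g / g) a b.
Proof.
  intros Ha Hb. apply (ex_RInt_div_removable (sym_sum t)); auto.
  - intro g. unfold sym_sum. auto_derive. repeat split; apply Fc_ex_derive.
  - unfold sym_sum. rewrite Rplus_0_l, Rminus_0_l, Fc_odd. ring.
Qed.

Lemma ex_RInt_Fc_div (a b : R) : 0 <= a -> 0 <= b -> ex_RInt (fun g => 2 * Fc g / g) a b.
Proof.
  intros Ha Hb. apply (ex_RInt_div_removable (fun g => 2 * Fc g)); auto.
  - intro g. auto_derive. apply Fc_ex_derive.
  - unfold Fc; ring.
Qed.

Lemma ex_RInt_HF_integrand (x y a b : R) : 0 <= a -> 0 <= b ->
  ex_RInt (HF_integrand F x y) a b.
Proof.
  intros Ha Hb.
  apply (ex_RInt_div_removable (fun g => F (y - g) - F (y + g) - F (x - g) + F (x + g))); auto.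
  - intro g. auto_derive. repeat split; apply F_ex_derive.
  - rewrite !Rminus_0_r, !Rplus_0_r. ring.
Qed.

Lemma HF_integrand_nonneg (x y g : R) : 0 <= x -> x <= y -> 0 < g ->
  0 <= HF_integrand F x y g.
Proof.
  intros Hx Hxy Hg. rewrite HF_integrand_sym.
  pose proof (F_pair_sum_antitone g x y ltac:(lra) Hx Hxy).
  unfold sym_sum, Fc. unfold Rdiv. rewrite <- Rmult_minus_distr_r.
  apply Rmult_le_pos; [lra | apply Rlt_le, Rinv_0_lt_compat, Hg].
Qed.

Lemma HF_integrand_origin (x y g : R) :
  HF_integrand F 0 y g - HF_integrand F 0 x g = HF_integrand F x y g.
Proof. unfold HF_integrand, Rdiv; ring. Qed.

(* Evenness of H F(x) - H F(0): the integrands for x and -x coincide, since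
   S (- x) g = S x g. *)
Lemma HF_diff_even (x L1 L2 : R) : HF_diff F 0 x L1 -> HF_diff F 0 (- x) L2 -> L1 = L2.
Proof.
  intros H1 H2. apply improper_int0_lim in H1. apply improper_int0_lim in H2.
  assert (Heq : forall b, RInt (HF_integrand F 0 (- x)) 0 b = RInt (HF_integrand F 0 x) 0 b).
  { intro b. apply RInt_ext; intros g _. rewrite !HF_integrand_sym.
    unfold sym_sum. replace (g - - x) with (g + x) by ring. replace (g + - x) with (g - x) by ring.
    simpl; unfold Rdiv; ring. }
  assert (H2' : lim_pinf (fun b => RInt (HF_integrand F 0 x) 0 b) (PI * L2)).
  { intros eps Heps. destruct (H2 eps Heps) as [M HM].
    exists M; intros b Hb. rewrite <- Heq. apply HM, Hb. }
  pose proof (lim_pinf_unique _ _ _ H1 H2') as HPI.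
  pose proof PI_RGT_0. apply Rmult_eq_reg_l with PI; lra.
Qed.

Lemma HF_diff_monotone (x y L1 L2 : R) : 0 <= x -> x <= y ->
  HF_diff F 0 x L1 -> HF_diff F 0 y L2 -> L1 <= L2.
Proof.
  intros Hx Hxy H1 H2. apply improper_int0_lim in H1. apply improper_int0_lim in H2.
  assert (PI * L1 <= PI * L2).
  { apply (lim_pinf_le _ _ _ _ 0 H1 H2). intros b Hb.
    apply RInt_le; auto; try apply ex_RInt_HF_integrand; try lra.
    intros g Hg. pose proof (HF_integrand_origin x y g).
    pose proof (HF_integrand_nonneg x y g Hx Hxy ltac:(lra)). lra. }
  pose proof PI_RGT_0. apply Rmult_le_reg_l with PI; lra.
Qed.

Lemma HF_diff_nonneg (x y L : R) : 0 <= x -> x <= y -> HF_diff F x y L -> 0 <= L.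
Proof.
  intros Hx Hxy HL. apply improper_int0_lim in HL.
  assert (0 <= PI * L).
  { apply (lim_pinf_le _ _ _ _ 0 (lim_pinf_const 0) HL). intros b Hb.
    apply RInt_ge_0; auto; [apply ex_RInt_HF_integrand; lra|].
    intros g Hg; apply HF_integrand_nonneg; lra. }
  pose proof PI_RGT_0. nra.
Qed.

(* S t g >= 0 for t, g >= 0, since Fc (g + t) >= Fc (t - g) = - Fc (g - t). *)
Lemma sym_sum_nonneg (t g : R) : 0 <= t -> 0 <= g -> 0 <= sym_sum t g.
Proof.
  intros Ht Hg. unfold sym_sum.
  replace (g - t) with (- (t - g)) by ring. rewrite Fc_odd.
  pose proof (Fc_monotone (t - g) (g + t) ltac:(lra)). lra.
Qed.

(* Beyond g = t, concavity gives S t g <= 2 Fc g. *)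
Lemma sym_sum_far_le (t g : R) : 0 < t -> t <= g -> sym_sum t g <= 2 * Fc g.
Proof.
  intros Ht Htg. pose proof (F_concave (g - t) g (g + t) ltac:(lra) ltac:(lra) ltac:(lra)) as Hc.
  replace (g - (g - t)) with t in Hc by ring. replace (g + t - g) with t in Hc by ring.
  apply Rmult_le_reg_r in Hc; [|exact Ht]. unfold sym_sum, Fc. lra.
Qed.

(* ... and, by monotonicity alone, (S t g - 2 Fc g) / g >= (Fc (g - t) - Fc g) / t. *)
Lemma sym_sum_far_ge (t g : R) : 0 < t <= g ->
  (Fc (g - t) - Fc g) / t <= sym_sum t g / g - 2 * Fc g / g.
Proof.
  intros Htg.
  pose proof (Fc_monotone g (g + t) ltac:(lra)). pose proof (Fc_monotone (g - t) g ltac:(lra)).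
  replace (sym_sum t g / g - 2 * Fc g / g)
    with ((Fc (g + t) - Fc g) / g + (Fc (g - t) - Fc g) / g) by (unfold sym_sum; field; lra).
  assert (0 <= (Fc (g + t) - Fc g) / g) by (apply Rdiv_le_0_compat; lra).
  assert ((Fc (g - t) - Fc g) / t <= (Fc (g - t) - Fc g) / g).
  { unfold Rdiv. apply Rmult_le_compat_neg_l; [lra|]. apply Rinv_le_contravar; lra. }
  lra.
Qed.

(* From now on F - F 0 is bounded by A (in the theorem, A = (Lp - Lm) / 2). *)
Variable A : R.
Hypothesis Fc_bound : forall t, - A <= Fc t <= A.

(* Below g = t: S t g <= A, and concavity on [0, t - g, t + g] gives the
   sharper bound S t g * (t - g) <= 2 g A near g = 0. *)
Lemma sym_sum_near_le (t g : R) : 0 <= g <= t -> sym_sum t g <= A.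
Proof.
  intros Hg. unfold sym_sum. replace (g - t) with (- (t - g)) by ring. rewrite Fc_odd.
  pose proof (Fc_bound (g + t)). pose proof (Fc_nonneg (t - g) ltac:(lra)). lra.
Qed.

Lemma sym_sum_near_concave (t g : R) : 0 < g < t -> sym_sum t g * (t - g) <= 2 * g * A.
Proof.
  intros Hg. pose proof (F_concave 0 (t - g) (t + g) ltac:(lra) ltac:(lra) ltac:(lra)) as Hc.
  replace (t + g - (t - g)) with (2 * g) in Hc by ring. rewrite Rminus_0_r in Hc.
  assert (Hs : sym_sum t g = F (t + g) - F (t - g)).
  { unfold sym_sum. replace (g - t) with (- (t - g)) by ring. rewrite Fc_odd.
    unfold Fc. rewrite (Rplus_comm g t). ring. }
  assert (Hb : Fc (t - g) * (2 * g) <= A * (2 * g))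
    by (apply Rmult_le_compat_r; [lra | apply Fc_bound]).
  rewrite Hs. unfold Fc in Hb. lra.
Qed.

Lemma near_integral_bound (t : R) : 0 < t ->
  0 <= RInt (fun g => sym_sum t g / g) 0 t <= 3 * A.
Proof.
  intro Ht. assert (Hint : forall a b, 0 <= a -> 0 <= b -> ex_RInt (fun g => sym_sum t g / g) a b)
    by (intros; apply ex_RInt_sym_sum_div; lra).
  assert (Hpos : forall g, 0 < g < t -> 0 <= sym_sum t g / g)
    by (intros g Hg; apply Rdiv_le_0_compat; [apply sym_sum_nonneg|]; lra).
  assert (Hlow := RInt_between_const (fun g => sym_sum t g / g) 0 (t / 2) 0 (4 * A / t)
                    ltac:(lra) (Hint 0 (t / 2) ltac:(lra) ltac:(lra))).
  assert (Hhigh := RInt_between_const (fun g => sym_sum t g / g) (t / 2) t 0 (2 * A / t)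
                    ltac:(lra) (Hint (t / 2) t ltac:(lra) ltac:(lra))).
  rewrite <- (RInt_Chasles _ 0 (t / 2) t) by (apply Hint; lra). unfold plus; simpl.
  destruct Hlow as [Hlow1 Hlow2].
  { intros g Hg. split; [apply Hpos; lra|]. apply Rle_div_l; [lra|].
    pose proof (sym_sum_nonneg t g ltac:(lra) ltac:(lra)).
    pose proof (sym_sum_near_concave t g ltac:(lra)).
    replace (4 * A / t * g) with (4 * g * A / t) by (field; lra).
    apply Rle_div_r; [lra|]. nra. }
  destruct Hhigh as [Hhigh1 Hhigh2].
  { intros g Hg. split; [apply Hpos; lra|]. apply Rle_div_l; [lra|].
    pose proof (sym_sum_near_le t g ltac:(lra)). pose proof (Fc_bound 0).
    replace (2 * A / t * g) with (A * (2 * g / t)) by (field; lra).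
    assert (1 <= 2 * g / t) by (apply Rle_div_r; lra). nra. }
  replace (4 * A / t * (t / 2 - 0)) with (2 * A) in Hlow2 by (field; lra).
  replace (2 * A / t * (t - t / 2)) with A in Hhigh2 by (field; lra). lra.
Qed.

(* The part above g = t is within A of int_t^b 2 Fc g / g: by sym_sum_far_ge it
   suffices that the integral of the translation difference Fc g - Fc (g - t)
   over [t, b] is at most t A (RInt_translate_diff_le, as 0 <= Fc <= A on [0, oo)). *)
Lemma far_integral_bound (t b : R) : 0 < t <= b ->
  - A <= RInt (fun g => sym_sum t g / g) t b - RInt (fun g => 2 * Fc g / g) t b <= 0.
Proof.
  intros Htb.
  assert (HS := ex_RInt_sym_sum_div t t b ltac:(lra) ltac:(lra)).
  assert (HE := ex_RInt_Fc_div t b ltac:(lra) ltac:(lra)).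
  assert (Htrans : ex_RInt (fun g => Fc (g + 0) - Fc (g + - t)) t b).
  { apply ex_RInt_derivable; intro z. auto_derive. repeat split; apply Fc_ex_derive. }
  split.
  - rewrite <- RInt_minus_R by assumption.
    assert (Hle : RInt (fun g => - / t * (Fc (g + 0) - Fc (g + - t))) t b
                  <= RInt (fun g => sym_sum t g / g - 2 * Fc g / g) t b).
    { apply RInt_le; [lra | exact (ex_RInt_scal _ t b (- / t) Htrans)
                       | exact (ex_RInt_minus _ _ t b HS HE) |].
      intros g Hg. rewrite Rplus_0_r. replace (g + - t) with (g - t) by ring.
      replace (- / t * (Fc g - Fc (g - t))) with ((Fc (g - t) - Fc g) / t) by (field; lra).
      apply sym_sum_far_ge; lra. }
    rewrite RInt_scal_R in Hle by exact Htrans.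
    assert (Hdiff := RInt_translate_diff_le Fc 0 (- t) t b 0 A Fc_ex_derive ltac:(lra)
                      ltac:(lra) ltac:(intros z Hz; split; [apply Fc_nonneg; lra | apply Fc_bound])).
    assert (- A <= - / t * RInt (fun g => Fc (g + 0) - Fc (g + - t)) t b).
    { replace (- A) with (- / t * ((0 - - t) * (A - 0))) by (field; lra).
      apply Rmult_le_compat_neg_l; [|exact Hdiff].
      rewrite <- Ropp_0. apply Ropp_le_contravar, Rlt_le, Rinv_0_lt_compat; lra. }
    lra.
  - assert (RInt (fun g => sym_sum t g / g) t b <= RInt (fun g => 2 * Fc g / g) t b).
    { apply RInt_le; auto; [lra|]. intros g Hg. unfold Rdiv.
      apply Rmult_le_compat_r; [apply Rlt_le, Rinv_0_lt_compat; lra|].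
      apply sym_sum_far_le; lra. }
    lra.
Qed.

Lemma sym_integral_approx (t b : R) : 0 <= t <= b ->
  - A <= RInt (fun g => sym_sum t g / g) 0 b - RInt (fun g => 2 * Fc g / g) t b <= 3 * A.
Proof.
  intros [[Ht | <-] Htb].
  - rewrite <- (RInt_Chasles _ 0 t b) by (apply ex_RInt_sym_sum_div; lra). unfold plus; simpl.
    pose proof (near_integral_bound t Ht). pose proof (far_integral_bound t b ltac:(lra)). lra.
  - rewrite (RInt_ext (fun g => sym_sum 0 g / g) (fun g => 2 * Fc g / g)).
    + pose proof (Fc_bound 0). lra.
    + intros g _. unfold sym_sum. rewrite Rplus_0_r, Rminus_0_r. simpl. unfold Rdiv; ring.
Qed.

Lemma HF_integral_approx (x y b : R) : 0 <= x -> x <= y -> y <= b ->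
  - (4 * A) <= RInt (HF_integrand F x y) 0 b - RInt (fun g => 2 * Fc g / g) x y <= 4 * A.
Proof.
  intros Hx Hxy Hyb.
  rewrite (RInt_ext _ (fun g => sym_sum x g / g - sym_sum y g / g))
    by (intros; apply HF_integrand_sym).
  rewrite RInt_minus_R by (apply ex_RInt_sym_sum_div; lra).
  pose proof (sym_integral_approx x b ltac:(lra)) as Hx_approx.
  pose proof (sym_integral_approx y b ltac:(lra)) as Hy_approx.
  pose proof (RInt_Chasles (fun g => 2 * Fc g / g) x y b
                (ex_RInt_Fc_div x y Hx ltac:(lra)) (ex_RInt_Fc_div y b ltac:(lra) ltac:(lra))) as Hsplit.
  unfold plus in Hsplit; simpl in Hsplit. lra.
Qed.

Lemma shifted_tail_bound (u v b1 b2 : R) : v <= u -> 0 < b1 <= b2 ->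
  0 <= RInt (fun g => (F (g + u) - F (g + v)) / g) b1 b2 <= 2 * (u - v) * A / b1.
Proof.
  intros Huv Hb.
  assert (Hint : ex_RInt (fun g => (F (g + u) - F (g + v)) / g) b1 b2).
  { apply (ex_RInt_div_pos (fun g => F (g + u) - F (g + v))); try lra.
    intro g. auto_derive. repeat split; apply F_ex_derive. }
  assert (Hnum : forall g, 0 <= F (g + u) - F (g + v))
    by (intro g; pose proof (F_monotone (g + v) (g + u) ltac:(lra)); lra).
  assert (Htrans : ex_RInt (fun g => F (g + u) - F (g + v)) b1 b2).
  { apply ex_RInt_derivable; intro z. auto_derive. repeat split; apply F_ex_derive. }
  split.
  - apply RInt_ge_0; auto; [lra|]. intros g Hg. apply Rdiv_le_0_compat; auto; lra.
  - assert (Hle : RInt (fun g => (F (g + u) - F (g + v)) / g) b1 b2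
                  <= RInt (fun g => / b1 * (F (g + u) - F (g + v))) b1 b2).
    { apply RInt_le; auto; [lra | exact (ex_RInt_scal _ b1 b2 (/ b1) Htrans) |].
      intros g Hg. rewrite Rmult_comm. apply Rmult_le_compat_l; auto.
      apply Rinv_le_contravar; lra. }
    rewrite RInt_scal_R in Hle by exact Htrans.
    assert (Hdiff := RInt_translate_diff_le F u v b1 b2 (F 0 - A) (F 0 + A) F_ex_derive Huv
                      ltac:(lra) ltac:(intros z _; pose proof (Fc_bound z); unfold Fc in *; lra)).
    assert (/ b1 * RInt (fun g => F (g + u) - F (g + v)) b1 b2 <= / b1 * (2 * (u - v) * A)).
    { apply Rmult_le_compat_l; [apply Rlt_le, Rinv_0_lt_compat; lra | lra]. }
    unfold Rdiv. lra.
Qed.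

Lemma shifted_tail_abs (u v b1 b2 : R) : 0 < b1 <= b2 ->
  Rabs (RInt (fun g => (F (g + u) - F (g + v)) / g) b1 b2) <= 2 * Rabs (u - v) * A / b1.
Proof.
  intros Hb. destruct (Rle_dec v u) as [Huv | Huv].
  - rewrite (Rabs_pos_eq (u - v)) by lra. pose proof (shifted_tail_bound u v b1 b2 Huv Hb).
    rewrite Rabs_pos_eq; lra.
  - pose proof (shifted_tail_bound v u b1 b2 ltac:(lra) Hb) as Hvu.
    rewrite (RInt_ext _ (fun g => -1 * ((F (g + v) - F (g + u)) / g)))
      by (intros; simpl; unfold Rdiv; ring).
    rewrite RInt_scal_R.
    + rewrite Rabs_mult, Rabs_m1, Rmult_1_l, Rabs_pos_eq by lra.
      rewrite Rabs_minus_sym, Rabs_pos_eq by lra. exact (proj2 Hvu).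
    + apply (ex_RInt_div_pos (fun g => F (g + v) - F (g + u))); try lra.
      intro g. auto_derive. repeat split; apply F_ex_derive.
Qed.

Lemma HF_integrand_translates (x y g : R) : HF_integrand F x y g =
  (F (g + x) - F (g + y)) / g + (F (g + - x) - F (g + - y)) / g.
Proof.
  unfold HF_integrand.
  replace (y - g) with (- (g + - y)) by ring. replace (x - g) with (- (g + - x)) by ring.
  rewrite !F_reflect. replace (y + g) with (g + y) by ring. replace (x + g) with (g + x) by ring.
  unfold Rdiv; ring.
Qed.

Lemma HF_integrand_tail (x y b1 b2 : R) : 0 < b1 <= b2 ->
  Rabs (RInt (HF_integrand F x y) 0 b2 - RInt (HF_integrand F x y) 0 b1)
  <= 4 * Rabs (x - y) * A / b1.
Proof.
  intros Hb.
  pose proof (RInt_Chasles (HF_integrand F x y) 0 b1 b2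
    (ex_RInt_HF_integrand x y 0 b1 ltac:(lra) ltac:(lra))
    (ex_RInt_HF_integrand x y b1 b2 ltac:(lra) ltac:(lra))) as Hsplit.
  unfold plus in Hsplit; simpl in Hsplit.
  replace (RInt (HF_integrand F x y) 0 b2 - RInt (HF_integrand F x y) 0 b1)
    with (RInt (HF_integrand F x y) b1 b2) by lra.
  rewrite (RInt_ext _ (fun g => (F (g + x) - F (g + y)) / g + (F (g + - x) - F (g + - y)) / g))
    by (intros; apply HF_integrand_translates).
  rewrite RInt_plus_R by (apply (ex_RInt_div_pos (fun g => F (g + _) - F (g + _))); try lra;
    intro g; auto_derive; repeat split; apply F_ex_derive).
  eapply Rle_trans; [apply Rabs_triang|].
  pose proof (shifted_tail_abs x y b1 b2 Hb) as Hplus.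
  pose proof (shifted_tail_abs (- x) (- y) b1 b2 Hb) as Hminus.
  replace (- x - - y) with (- (x - y)) in Hminus by ring. rewrite Rabs_Ropp in Hminus.
  unfold Rdiv in *. lra.
Qed.

Lemma HF_diff_exists (x y : R) : exists L, HF_diff F x y L.
Proof.
  destruct (lim_pinf_of_tail_bound (fun b => RInt (HF_integrand F x y) 0 b)
              (4 * Rabs (x - y) * A)) as [l Hl].
  { intros b1 b2 Hb. apply HF_integrand_tail; lra. }
  exists (l / PI). unfold HF_diff.
  replace (PI * (l / PI)) with l by (field; apply PI_neq0).
  apply improper_int0_intro; [|exact Hl].
  intros b Hb; apply ex_RInt_HF_integrand; lra.
Qed.

(* The quantitative estimate, passing HF_integral_approx to the limit b -> oo. *)
Lemma HF_diff_estimate (x y L : R) : 0 <= x -> x < y -> HF_diff F x y L ->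
  exists pr : Riemann_integrable (fun g => (F g - F (- g)) / g) x y,
    - (4 * A / PI) <= L - 1 / PI * RiemannInt pr <= 4 * A / PI.
Proof.
  intros Hx Hxy HL. apply improper_int0_lim in HL.
  assert (Hprinc : forall g, (F g - F (- g)) / g = 2 * Fc g / g) by apply principal_integrand_eq.
  assert (Hint : ex_RInt (fun g => (F g - F (- g)) / g) x y).
  { apply (ex_RInt_ext (fun g => 2 * Fc g / g)); [intros; symmetry; apply Hprinc|].
    apply ex_RInt_Fc_div; lra. }
  exists (ex_RInt_Reals_0 _ _ _ Hint). rewrite <- RInt_Reals.
  rewrite (RInt_ext _ (fun g => 2 * Fc g / g)) by (intros; apply Hprinc).
  set (D := RInt (fun g => 2 * Fc g / g) x y).
  assert (Hlo : D - 4 * A <= PI * L).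
  { apply (lim_pinf_le _ _ _ _ y (lim_pinf_const _) HL). intros b Hb.
    pose proof (HF_integral_approx x y b Hx ltac:(lra) Hb). unfold D; lra. }
  assert (Hhi : PI * L <= D + 4 * A).
  { apply (lim_pinf_le _ _ _ _ y HL (lim_pinf_const _)). intros b Hb.
    pose proof (HF_integral_approx x y b Hx ltac:(lra) Hb). unfold D; lra. }
  pose proof PI_RGT_0. assert (Hinv : 0 < / PI) by (apply Rinv_0_lt_compat; lra).
  replace (L - 1 / PI * D) with ((PI * L - D) * / PI) by (field; lra).
  unfold Rdiv. rewrite Ropp_mult_distr_l.
  split; apply Rmult_le_compat_r; lra.
Qed.

End RadialDerivative.

Theorem lemma5p7 (mu nu : R) (F F' : R -> R)
  (Hmu : 1/2 < mu) (Hnu0 : 0 < nu) (Hnu1 : nu < 1/2)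
  (HF' : forall x, derivable_pt_lim F x (F' x))
  (HF'cont : continuity F')
  (HF'even : forall x, F' (- x) = F' x)
  (HF'nonneg : forall x, 0 <= F' x)
  (HF'decr : forall a b, 0 <= a -> a <= b -> F' b <= F' a)
  (Lp Lm : R) (HLp : lim_pinf F Lp) (HLm : lim_minf F Lm)
  (Hjump : Lp - Lm = (mu - nu) * PI) :
  (* H F(y) - H F(x) is well defined for all x, y *)
  (forall x y, exists L, HF_diff F x y L) /\
  (* x |-> H F(x) - H F(0) is even *)
  (forall x L1 L2, HF_diff F 0 x L1 -> HF_diff F 0 (- x) L2 -> L1 = L2) /\
  (* x |-> H F(x) - H F(0) is increasing on [0, oo) *)
  (forall x y L1 L2, 0 <= x -> x <= y ->
     HF_diff F 0 x L1 -> HF_diff F 0 y L2 -> L1 <= L2) /\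
  (* quantitative estimate *)
  (forall x y L, 0 <= x -> x < y -> HF_diff F x y L ->
     0 <= L /\
     exists pr : Riemann_integrable (fun g => (F g - F (- g)) / g) x y,
       - (2 * (mu - nu)) <= L - (1 / PI) * RiemannInt pr <= 2 * (mu - nu)).
Proof.
  set (A := (Lp - Lm) / 2).
  assert (HA : forall t, - A <= Fc F t <= A).
  { intro t. pose proof (F_limits_mean F F' HF' HF'even Lp Lm HLp HLm).
    pose proof (F_le_lim_pinf F F' HF' HF'nonneg Lp t HLp).
    pose proof (F_ge_lim_minf F F' HF' HF'nonneg Lm t HLm).
    unfold A, Fc. lra. }
  assert (HA_PI : 4 * A / PI = 2 * (mu - nu)) by (unfold A; rewrite Hjump; field; apply PI_neq0).
  split; [|split; [|split]].
  - intros x y; apply (HF_diff_exists F F') with (A := A); auto.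
  - intros x; apply (HF_diff_even F F'); auto.
  - intros x y; apply (HF_diff_monotone F F'); auto.
  - intros x y L Hx Hxy HL. split.
    + apply (HF_diff_nonneg F F') with (x := x) (y := y); auto; lra.
    + rewrite <- HA_PI. apply (HF_diff_estimate F F') with (A := A); auto.
Qed.
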